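(* Let $(E,\rho)$ be a weighted space and $\ell:\mathscr{B}^\rho(E)\to\mathbb{R}$ a continuous linear functional. Then $\ell$ is a smooth algebra homomorphism if and only if there exists $x\in E$ with $\ell(f)=f(x)$ for all $f\in\mathscr{B}^\rho(E)$. The point $x$ is uniquely determined by $\ell$.
   Context: A weighted space is a pair $(E,\rho)$ where $E$ is a completely regular Hausdorff topological space and $\rho:E\to(0,\infty)$ is an admissible weight function, meaning that for every $R\ge 0$ the sublevel set $K_R:=\{x\in E:\rho(x)\le R\}$ is compact. For $f:E\to\mathbb{R}$ put $\|f\|_\rho:=\sup_{x\in E}|f(x)|/\rho(x)$; $\mathscr{B}^\rho(E)$ denotes the closure of $C_b(E)$ with respect to $\|\cdot\|_\rho$ inside $\{f:E\to\mathbb{R}:\|f\|_\rho<\infty\}$. A continuous linear functional $\ell$ on $\mathscr{B}^\rho(E)$ is a smooth algebra homomorphism if for every $n$, every bounded smooth $\phi:\mathbb{R}^n\to\mathbb{R}$ and all $f_1,\dots,f_n\in\mathscr{B}^\rho(E)$ one has $\ell(\phi(f_1(\cdot),\dots,f_n(\cdot)))=\phi(\ell(f_1),\dots,\ell(f_n))$. *)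

From HB Require Import structures.
From mathcomp Require Import all_boot all_order all_algebra.
From mathcomp Require Import all_classical all_reals all_analysis.
Set Implicit Arguments. Unset Strict Implicit. Unset Printing Implicit Defensive.
Import Order.TTheory GRing.Theory Num.Theory.
Import numFieldNormedType.Exports.
Local Open Scope classical_set_scope.
Local Open Scope ring_scope.

Definition admissible_weight (R : realType) (E : topologicalType) (rho : E -> R) :=
  (forall x, 0 < rho x) /\ (forall r : R, compact [set x | rho x <= r]).

(* ||h||_rho <= c, written out: |h x| <= c * rho x for all x. *)
Definition wbound (R : realType) (E : topologicalType) (rho : E -> R)
  (h : E -> R) (c : R) := forall x, `|h x| <= c * rho x.

Definition Cb (R : realType) (E : topologicalType) : set (E -> R) :=
  [set g | continuous g /\ exists M : R, forall x, `|g x| <= M].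

(* B^rho(E): closure of C_b(E) w.r.t. ||.||_rho inside {f | ||f||_rho < oo}. *)
Definition Brho (R : realType) (E : topologicalType) (rho : E -> R) : set (E -> R) :=
  [set f | (exists c : R, wbound rho f c) /\
     forall eps : R, 0 < eps -> exists g : E -> R, Cb g /\ wbound rho (f \- g) eps].

(* l is a continuous linear functional on B^rho(E) (values of l outside
   B^rho(E) are irrelevant). *)
Definition cont_lin_functional (R : realType) (E : topologicalType) (rho : E -> R)
  (l : (E -> R) -> R) :=
  (forall (a : R) f g, Brho rho f -> Brho rho g ->
      l (fun x => a * f x + g x) = a * l f + l g) /\
  (forall f, Brho rho f -> forall eps : R, 0 < eps -> exists2 delta : R, 0 < delta &
      forall g, Brho rho g -> wbound rho (g \- f) delta -> `|l g - l f| < eps).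

Fixpoint Ck (R : realType) (n : nat) (k : nat) (phi : 'rV[R]_n -> R) : Prop :=
  match k with
  | 0 => continuous phi
  | k'.+1 => (forall v, differentiable phi v) /\
             forall u : 'rV[R]_n, Ck k' (fun v => derive phi v u)
  end.

Definition smooth (R : realType) (n : nat) (phi : 'rV[R]_n -> R) :=
  forall k, Ck k phi.

Definition smooth_algebra_hom (R : realType) (E : topologicalType) (rho : E -> R)
  (l : (E -> R) -> R) :=
  forall (n : nat) (phi : 'rV[R]_n -> R) (f : 'I_n -> (E -> R)),
    smooth phi -> (exists M : R, forall v, `|phi v| <= M) ->
    (forall i, Brho rho (f i)) ->
    l (fun x => phi (\row_i f i x)) = phi (\row_i l (f i)).

From HB Require Import structures.
From mathcomp Require Import all_boot all_order all_algebra.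
From mathcomp Require Import all_classical all_reals all_analysis.
From mathcomp Require Import ring lra.
Set Implicit Arguments. Unset Strict Implicit. Unset Printing Implicit Defensive.
Import Order.TTheory GRing.Theory Num.Theory.
Import numFieldNormedType.Exports.
Local Open Scope classical_set_scope.
Local Open Scope ring_scope.

(* Evaluations are smooth algebra homomorphisms because composing with a bounded
   continuous phi preserves B^rho(E): on a sublevel set of rho the arguments stay in a
   compact ball where phi is uniformly continuous, and elsewhere rho is so large that
   the bound on phi suffices.  Conversely, let l be a smooth homomorphism and
   g_1, ..., g_n in C_b(E).  The Gaussian bump exp(-k sum_j ((g_j - l g_j) / e_j)^2) is
   sent to 1 by l, so by continuity of l it cannot be rho-small everywhere: some x in
   the compact set {rho <= 1/d} has |g_j x - l g_j| <= e_j for all j.  These finite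
   intersection properties give a cluster point x with l g = g x on C_b(E), hence on
   B^rho(E) by density.  Complete regularity separates points, whence uniqueness. *)

(* Smoothness is only needed for the Gaussian bumps; this class contains them and is
   closed under directional derivatives, which makes it smooth in the sense of [Ck]. *)
Section ExpPoly.
Variables (R : realType) (n : nat).
Implicit Types (f g : 'rV[R]_n -> R) (u v : 'rV[R]_n).

Inductive exp_poly : ('rV[R]_n -> R) -> Prop :=
| exp_poly_cst c : exp_poly (fun _ => c)
| exp_poly_coord i : exp_poly (fun v => v ord0 i)
| exp_poly_add f g : exp_poly f -> exp_poly g -> exp_poly (fun v => f v + g v)
| exp_poly_mul f g : exp_poly f -> exp_poly g -> exp_poly (fun v => f v * g v)
| exp_poly_exp f : exp_poly f -> exp_poly (fun v => expR (f v)).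

Lemma exp_poly_ext g f : exp_poly g -> g =1 f -> exp_poly f.
Proof. by move=> + /funext <-. Qed.

Lemma exp_poly_differentiable f : exp_poly f -> forall v, differentiable f v.
Proof.
elim=> {f} [c|i|f g _ df _ dg|f g _ df _ dg|f _ df] v.
- exact: differentiable_cst.
- exact: differentiable_coord.
- exact: differentiableD.
- exact: differentiableM.
- apply: (@differentiable_comp _ _ _ _ f expR); first exact: df.
  exact/derivable1_diffP/derivable_expR.
Qed.

Lemma derive_coord i u v : 'D_u (fun w : 'rV[R]_n => w ord0 i) v = u ord0 i.
Proof.
have @c : {linear 'rV[R]_n -> R}.
  by exists (fun w : 'rV[R]_n => w ord0 i); do 2![eexists]; do ?[constructor];
     rewrite ?mxE// => ? *; rewrite ?mxE//; move=> ?; rewrite !mxE.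
rewrite (_ : (fun _ => _) = c) // deriveE; last exact/linear_differentiable/coord_continuous.
by rewrite diff_lin //; exact: coord_continuous.
Qed.

Lemma derive_expR_comp f u v : differentiable f v ->
  'D_u (fun w => expR (f w)) v = 'D_u f v * expR (f v).
Proof.
move=> df; have dexp : differentiable expR (f v).
  exact/derivable1_diffP/derivable_expR.
rewrite (_ : (fun w => _) = expR \o f) // deriveE; last exact: differentiable_comp.
rewrite diff_comp // /= deriv1E; last exact: derivable_expR.
by rewrite derive1E derive_val -deriveE.
Qed.

Lemma exp_poly_derive f u : exp_poly f -> exp_poly (fun v => 'D_u f v).
Proof.
have derivable_exp_poly g v : exp_poly g -> derivable g v u.
  by move=> pg; apply: diff_derivable; exact: exp_poly_differentiable.
elim=> {f} [c|i|f g pf df pg dg|f g pf df pg dg|f pf df].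
- by apply: (exp_poly_ext (exp_poly_cst 0)) => v; rewrite derive_cst.
- by apply: (exp_poly_ext (exp_poly_cst (u ord0 i))) => v; rewrite derive_coord.
- apply: (exp_poly_ext (exp_poly_add df dg)) => v.
  by rewrite (_ : (fun v => _) = f + g) // deriveD //; exact: derivable_exp_poly.
- apply: (exp_poly_ext (exp_poly_add (exp_poly_mul pf dg) (exp_poly_mul pg df))) => v.
  by rewrite (_ : (fun v => _) = f * g) // deriveM //; exact: derivable_exp_poly.
- apply: (exp_poly_ext (exp_poly_mul df (exp_poly_exp pf))) => v.
  by rewrite derive_expR_comp //; exact: exp_poly_differentiable.
Qed.

Lemma exp_poly_smooth f : exp_poly f -> smooth f.
Proof.
move=> pf k; elim: k f pf => [|k IHk] f pf /=.
  by move=> v; apply: differentiable_continuous; exact: exp_poly_differentiable.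
by split=> [|u]; [exact: exp_poly_differentiable | apply: IHk; exact: exp_poly_derive].
Qed.

Lemma exp_poly_sum (I : Type) (r : seq I) (F : I -> 'rV[R]_n -> R) :
  (forall i, exp_poly (F i)) -> exp_poly (fun v => \sum_(i <- r) F i v).
Proof.
move=> pF; elim: r => [|i r IHr].
  by apply: (exp_poly_ext (exp_poly_cst 0)) => v; rewrite big_nil.
by apply: (exp_poly_ext (exp_poly_add (pF i) IHr)) => v; rewrite big_cons.
Qed.

End ExpPoly.

Section GaussBump.
Variables (R : realType) (n : nat).

Definition gauss_bump (k : R) (a e : 'I_n -> R) (v : 'rV[R]_n) :=
  expR (- (k * \sum_j ((v ord0 j - a j) / e j) ^+ 2)).

Variables (k : R) (a e : 'I_n -> R).

Lemma exp_poly_gauss_bump : exp_poly (gauss_bump k a e).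
Proof.
have sq j : exp_poly (fun v : 'rV[R]_n => ((v ord0 j - a j) / e j) ^+ 2).
  have lin := exp_poly_mul (exp_poly_add (@exp_poly_coord R n j) (exp_poly_cst n (- a j)))
                           (exp_poly_cst n (e j)^-1).
  by apply: exp_poly_ext (exp_poly_mul lin lin) _ => v; rewrite expr2.
apply/exp_poly_exp/(exp_poly_ext (exp_poly_mul (exp_poly_cst n (- k)) (exp_poly_sum _ sq))).
by move=> v; rewrite mulNr.
Qed.

Lemma gauss_bump_center : gauss_bump k a e (\row_j a j) = 1.
Proof.
by rewrite /gauss_bump big1 ?mulr0 ?oppr0 ?expR0 // => j _; rewrite mxE subrr mul0r expr0n.
Qed.

Hypothesis k_ge0 : 0 <= k.

Lemma gauss_bump_exponent_ge0 (v : 'rV[R]_n) : 0 <= k * \sum_j ((v ord0 j - a j) / e j) ^+ 2.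
Proof. by rewrite mulr_ge0 // sumr_ge0 // => j _; exact: sqr_ge0. Qed.

Lemma gauss_bump_norm_le1 (v : 'rV[R]_n) : `|gauss_bump k a e v| <= 1.
Proof.
by rewrite ger0_norm ?expR_ge0 // expR_le1 oppr_le0 gauss_bump_exponent_ge0.
Qed.

Lemma gauss_bump_far (v : 'rV[R]_n) j : 0 < e j -> e j < `|v ord0 j - a j| ->
  `|gauss_bump k a e v| <= expR (- k).
Proof.
move=> ej_gt0 far; rewrite /gauss_bump ger0_norm ?expR_ge0 // ler_expR lerN2 -[leLHS]mulr1 ler_wpM2l //.
rewrite (bigD1 j) //= ler_wpDr ?sumr_ge0 // => [i _|]; first exact: sqr_ge0.
rewrite -real_normK ?num_real // expr_ge1 // normrM normfV (gtr0_norm ej_gt0).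
by rewrite ler_pdivlMr // mul1r ltW.
Qed.

End GaussBump.

Lemma expRN_lt_inv (R : realType) (k : R) : 0 < k -> expR (- k) < k^-1.
Proof.
move=> k_gt0; rewrite expRN ltf_pV2 ?posrE ?expR_gt0 //.
by apply: lt_le_trans (expR_ge1Dx k); rewrite ltrDr.
Qed.

Lemma compact_unif_continuous (R : realType) (V : normedModType R) (phi : V -> R)
    (K : set V) (eta : R) :
  compact K -> continuous phi -> 0 < eta ->
  exists2 d, 0 < d & forall v w, K v -> `|v - w| < d -> `|phi v - phi w| < eta.
Proof.
move=> cK cphi eta0.
pose close d v := forall w, `|v - w| < d -> `|phi v - phi w| < eta.
have local x : K x -> \forall v \near x & d \near 0^'+, close d v.
  move=> _; have eta20 : 0 < eta / 2 by rewrite divr_gt0.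
  have [r r0 hr] := (nbhs_ballP _ _).1 (@cvgr_dist_lt _ _ _ _ _ phi (phi x) (cphi x) _ eta20).
  have r20 : 0 < r / 2 by rewrite divr_gt0.
  exists (ball x (r / 2), [set d | d < r / 2]); first split.
  - exact: nbhsx_ballx.
  - exact: nbhs_right_lt.
  move=> [v d] [/= xv dr] w vw; move: xv; rewrite -ball_normE /= => xv.
  have hv : `|phi x - phi v| < eta / 2 by apply: hr; rewrite -ball_normE /=; lra.
  have hw : `|phi x - phi w| < eta / 2.
    apply: hr; rewrite -ball_normE /=.
    rewrite (_ : x - w = (x - v) + (v - w)); last by rewrite addrA subrK.
    by apply: le_lt_trans (ler_normD _ _) _; lra.
  rewrite (_ : phi v - phi w = (phi x - phi w) - (phi x - phi v)); last by ring.
  by apply: le_lt_trans (ler_normB _ _) _; lra.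
have near_close : \forall d \near 0^'+, K `<=` close d.
  exact: (compact_near_coveringP K).1 cK R _ close _ local.
have [d [/= d0 Kd]] := filter_ex (filterI (nbhs_right_gt 0) near_close).
by exists d => // v w /Kd; apply.
Qed.

Lemma rV_norm_le (R : realType) n (v : 'rV[R]_n) c :
  0 <= c -> (forall i, `|v ord0 i| <= c) -> `|v| <= c.
Proof.
move=> c_ge0 vc; rewrite [leLHS]/Num.norm /= mx_normrE; apply/bigmax_leP; split=> //.
by move=> [i j] _ /=; rewrite (ord1 i); exact: vc.
Qed.

Lemma row_continuous (R : realType) (E : topologicalType) n (f : 'I_n -> E -> R) :
  (forall j, continuous (f j)) -> continuous (fun x => \row_j f j x).
Proof.
move=> cf x; apply/cvg_ballP => e e_gt0.
have near_f j : \forall y \near x, ball (f j x) e (f j y).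
  exact: (cvg_ballP _ _).1 (cf j x) e e_gt0.
near=> y; have fy : forall j, ball (f j x) e (f j y) by near: y; exact: filter_forall.
by split=> // i j; rewrite !mxE.
Unshelve. all: by end_near.
Qed.

Lemma admissible_weight_lbound (R : realType) (E : topologicalType) (rho : E -> R) :
  hausdorff_space E -> admissible_weight rho -> exists2 m, 0 < m & forall x, m <= rho x.
Proof.
move=> hE [rho_gt0 rho_cpt].
have local x : [set y | rho y <= 1] x ->
    \forall y \near x & d \near 0^'+, d <= rho y.
  move=> _; have rx2 : 0 < rho x / 2 by rewrite divr_gt0.
  exists (~` [set y | rho y <= rho x / 2], [set d | d < rho x / 2]); first split.
  - apply: open_nbhs_nbhs; split; first by rewrite openC; exact: compact_closed.
    by apply/negP; rewrite -ltNge ltr_pdivrMr // ltr_pMr // ltr1n.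
  - exact: nbhs_right_lt.
  by move=> [y d] [/= /negP]; rewrite -ltNge => ry dr; rewrite ltW // (lt_trans dr).
have near_lbound : \forall d \near 0^'+, [set y | rho y <= 1] `<=` [set y | d <= rho y].
  exact: (compact_near_coveringP _).1 (rho_cpt 1) R _ (fun d y => d <= rho y) _ local.
have [d [/= d_gt0 lb]] := filter_ex (filterI (nbhs_right_gt 0) near_lbound).
exists (Num.min d 1) => [|x]; first by rewrite lt_min d_gt0 ltr01.
by have [/lb rx|/ltW rx] := leP (rho x) 1; rewrite ge_min rx ?orbT.
Qed.

Lemma rV_norm_le_compact (R : realType) n (r : R) : compact [set v : 'rV[R]_n | `|v| <= r].
Proof.
apply: bounded_closed_compact.
  exists r; split; first exact: num_real.
  by move=> M rM v vr; rewrite /= (le_trans vr) // ltW.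
apply: (@preimage_closed _ _ (@Num.norm _ 'rV[R]_n) [set x | x <= r]).
  by move=> v _; exact: norm_continuous.
exact: closed_le.
Qed.

Lemma cst_Cb (R : realType) (E : topologicalType) (c : R) : Cb (fun _ : E => c).
Proof. by split; [exact: cst_continuous | exists `|c|]. Qed.

Section WeightedSpace.
Variables (R : realType) (E : topologicalType) (rho : E -> R) (m : R).
Hypotheses (m_gt0 : 0 < m) (m_le_rho : forall x, m <= rho x).

Lemma rho_gt0 x : 0 < rho x.
Proof. exact: lt_le_trans m_gt0 (m_le_rho x). Qed.

Lemma bounded_wbound (g : E -> R) (M : R) : (forall x, `|g x| <= M) -> wbound rho g (M / m).
Proof.
move=> gM x; have M_ge0 := le_trans (normr_ge0 _) (gM x).
by rewrite (le_trans (gM x)) // mulrAC ler_pdivlMr // ler_wpM2l.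
Qed.

Lemma Cb_Brho g : Cb g -> Brho rho g.
Proof.
move=> [gc [M gM]]; split; first by exists (M / m); exact: bounded_wbound.
move=> e e_gt0; exists g; split; first by split=> //; exists M.
by move=> x; rewrite /= subrr normr0 mulr_ge0 ?ltW ?rho_gt0.
Qed.

Lemma Brho_row_wbound n (f : 'I_n -> E -> R) : (forall i, Brho rho (f i)) ->
  exists2 C, 0 <= C & forall x, `|\row_i f i x| <= C * rho x.
Proof.
move=> Bf; have [c fc] := choice (fun i => (Bf i).1).
exists (\sum_i `|c i|) => [|x]; first exact: sumr_ge0.
apply: rV_norm_le => [|i]; first by rewrite mulr_ge0 ?sumr_ge0 ?ltW ?rho_gt0.
rewrite mxE (le_trans (fc i x)) // ler_wpM2r //; first exact/ltW/rho_gt0.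
apply: le_trans (ler_norm _) _.
by rewrite (bigD1 i) //= lerDl sumr_ge0.
Qed.

Lemma Brho_row_approx n (f : 'I_n -> E -> R) (e : R) : (forall i, Brho rho (f i)) -> 0 < e ->
  exists2 g : 'I_n -> E -> R, forall i, Cb (g i) &
    forall x, `|\row_i f i x - \row_i g i x| <= e * rho x.
Proof.
move=> Bf e_gt0; have [g fg] := choice (fun i => (Bf i).2 e e_gt0).
exists g => [i|x]; first exact: (fg i).1.
apply: rV_norm_le => [|i]; first by rewrite mulr_ge0 ?ltW ?rho_gt0.
by rewrite !mxE; exact: (fg i).2.
Qed.

Lemma Brho_comp n (phi : 'rV[R]_n -> R) (f : 'I_n -> E -> R) :
  continuous phi -> (exists M, forall v, `|phi v| <= M) -> (forall i, Brho rho (f i)) ->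
  Brho rho (fun x => phi (\row_i f i x)).
Proof.
move=> cphi [M phiM] Bf; have M_ge0 : 0 <= M := le_trans (normr_ge0 _) (phiM 0).
split; first by exists (M / m); exact: bounded_wbound.
move=> e e_gt0; have [C C_ge0 fC] := Brho_row_wbound Bf.
(* beyond [rho <= r] the bound 2M on |phi _ - phi _| is already below e * rho *)
pose r := (M *+ 2 + 1) / e.
have r_gt0 : 0 < r by rewrite divr_gt0 // ltr_wpDl // mulrn_wge0.
have [d d_gt0 phi_uc] := compact_unif_continuous
  (@rV_norm_le_compact _ n (C * r)) cphi (mulr_gt0 e_gt0 m_gt0).
have [g Cg fg] := Brho_row_approx Bf (divr_gt0 d_gt0 (mulrn_wgt0 2 r_gt0)).
exists (fun x => phi (\row_i g i x)); split.
  split; last by exists M.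
  move=> y; apply: (@continuous_comp _ _ _ (fun x => \row_i g i x) phi); last exact: cphi.
  by apply: row_continuous => i; case: (Cg i).
move=> x /=; have [rx|rx] := leP (rho x) r.
  apply/ltW/(lt_le_trans (phi_uc _ _ _ _)).
  - by rewrite /= (le_trans (fC x)) // ler_wpM2l.
  - apply: le_lt_trans (fg x) _.
    apply: le_lt_trans (ler_wpM2l _ rx) _.
      by rewrite divr_ge0 ?mulrn_wge0 // ltW.
    have -> : d / (r *+ 2) * r = d / 2 by rewrite -mulr_natr; field; rewrite gt_eqF.
    lra.
  - by rewrite ler_pM2l // m_le_rho.
apply: le_trans (ler_normB _ _) _.
apply: (@le_trans _ _ (M *+ 2)); first by rewrite mulr2n lerD.
have : r * e < rho x * e by rewrite ltr_pM2r.
rewrite divfK ?gt_eqF // mulrC; lra.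
Qed.

Lemma eval_smooth_hom (l : (E -> R) -> R) x :
  (forall f, Brho rho f -> l f = f x) -> smooth_algebra_hom rho l.
Proof.
move=> lx n phi f phi_smooth phi_bounded Bf.
rewrite lx; last exact: Brho_comp (phi_smooth 0%N) phi_bounded Bf.
by congr phi; apply/rowP => i; rewrite !mxE lx.
Qed.

Lemma eval_point_unique (l : (E -> R) -> R) x y :
  completely_regular_space E -> hausdorff_space E ->
  (forall f, Brho rho f -> l f = f x) -> (forall f, Brho rho f -> l f = f y) -> x = y.
Proof.
move=> E_creg hE lx ly; apply: contrapT => xy.
have y_closed : closed [set y] by exact/accessible_closed_set1/hausdorff_accessible.
have := E_creg x [set y] y_closed xy.
move/(@uniform_separatorP _ R) => [g [g_cont g_01 g0 g1]].
have Cg : Cb g.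
  split=> //; exists 1 => z; have : `[0, 1]%classic (g z) by apply: g_01; exists z.
  by rewrite /= in_itv /= => /andP[gz0 gz1]; rewrite ger0_norm.
have gx : g x = 0 by apply: g0; exists x.
have gy : g y = 1 by apply: g1; exists y.
have := lx g (Cb_Brho Cg); rewrite (ly g (Cb_Brho Cg)) gx gy => /eqP.
by rewrite oner_eq0.
Qed.

Section ContinuousFunctional.
Variable l : (E -> R) -> R.
Hypothesis l_cont_lin : cont_lin_functional rho l.

Lemma cont_lin_functional0 : l (fun _ => 0) = 0.
Proof.
have B0 := Cb_Brho (cst_Cb E 0).
have := l_cont_lin.1 1 _ _ B0 B0; rewrite mul1r addr0 mul1r.
by move=> h; lra.
Qed.

Lemma cont_lin_functional_small :
  exists2 d, 0 < d & forall g, Brho rho g -> wbound rho g d -> `|l g| < 1.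
Proof.
have [d d_gt0 ld] := l_cont_lin.2 _ (Cb_Brho (cst_Cb E 0)) 1 ltr01.
exists d => // g Bg gd; have := ld g Bg; rewrite cont_lin_functional0 subr0; apply=> x.
by rewrite /= subr0; exact: gd.
Qed.

Lemma eval_on_Cb_Brho x : (forall g, Cb g -> l g = g x) ->
  forall f, Brho rho f -> l f = f x.
Proof.
move=> lx f Bf; apply/subr0_eq/eqP; rewrite -normr_le0; apply/ler_addgt0Pr => e e_gt0.
rewrite add0r; have e2_gt0 : 0 < e / 2 by rewrite divr_gt0.
have [d d_gt0 ld] := l_cont_lin.2 f Bf _ e2_gt0.
have rx := rho_gt0 x.
pose e' := Num.min d (e / 2 / rho x).
have e'_gt0 : 0 < e' by rewrite lt_min d_gt0 divr_gt0.
have [g [Cg fg]] := Bf.2 e' e'_gt0.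
have lg : `|g x - l f| < e / 2.
  rewrite -lx //; apply: ld; first exact: Cb_Brho.
  move=> y; rewrite /= distrC; apply: le_trans (fg y) _.
  by apply: ler_wpM2r; [exact/ltW/rho_gt0 | rewrite ge_min lexx].
have gx : `|g x - f x| <= e / 2.
  rewrite distrC; apply: le_trans (fg x) _.
  by rewrite -ler_pdivlMr // ge_min lexx orbT.
rewrite (_ : l f - f x = (g x - f x) - (g x - l f)); last by ring.
apply: le_trans (ler_normB _ _) _; lra.
Qed.

Section SmoothHom.
Hypothesis l_smooth : smooth_algebra_hom rho l.

Section ApproximatePoint.
Variable d : R.
Hypotheses (d_gt0 : 0 < d)
  (l_small : forall g, Brho rho g -> wbound rho g d -> `|l g| < 1).

(* If no such point existed, a Gaussian bump centred at (l g_j)_j, composed with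
   (g_j)_j, would be rho-small everywhere while l sends it to 1. *)
Lemma smooth_hom_approx_point n (g : 'I_n -> E -> R) (e : 'I_n -> R) :
  (forall j, Cb (g j)) -> (forall j, 0 < e j) ->
  exists x, rho x <= d^-1 /\ forall j, `|g j x - l (g j)| <= e j.
Proof.
move=> Cg e_gt0; apply: contrapT => no_point.
have far x : rho x <= d^-1 -> exists j, e j < `|g j x - l (g j)|.
  move=> Kx; apply: contrapT => near_all; apply: no_point; exists x; split=> // j.
  by rewrite leNgt; apply/negP => ej; apply: near_all; exists j.
pose k := (d * m)^-1; have k_gt0 : 0 < k by rewrite invr_gt0 mulr_gt0.
pose bump := gauss_bump k (fun j => l (g j)) e.
have bump_le1 v : `|bump v| <= 1 by exact: gauss_bump_norm_le1 (ltW k_gt0) _.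
pose q x := bump (\row_j g j x).
have Cq : Cb q.
  split; last by exists 1 => x; exact: bump_le1.
  move=> x; apply: (@continuous_comp _ _ _ (fun x => \row_j g j x) bump).
    by apply: row_continuous => j; case: (Cg j).
  exact/differentiable_continuous/exp_poly_differentiable/exp_poly_gauss_bump.
have lq : l q = 1.
  rewrite /q l_smooth; first exact: gauss_bump_center.
  - exact: exp_poly_smooth (exp_poly_gauss_bump _ _ _).
  - by exists 1.
  - by move=> j; exact: Cb_Brho.
have q_small : wbound rho q d.
  move=> x; have [Kx|Kx] := leP (rho x) d^-1.
    have [j gj] := far x Kx.
    apply: le_trans (gauss_bump_far (ltW k_gt0) (e_gt0 j) _) _; first by rewrite mxE.
    apply/ltW/(lt_le_trans (expRN_lt_inv k_gt0)).
    by rewrite invrK; apply: ler_wpM2l; [exact: ltW | exact: m_le_rho].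
  apply: le_trans (bump_le1 _) _.
  by rewrite -(mulfV (lt0r_neq0 d_gt0)); apply: ler_wpM2l; exact: ltW.
by have := l_small (Cb_Brho Cq) q_small; rewrite lq normr1 ltxx.
Qed.

End ApproximatePoint.

(* x is a cluster point, in the compact set [rho <= d^-1], of the filter generated
   by the sets of approximate evaluation points of single pairs (g, e). *)
Lemma smooth_hom_eval : admissible_weight rho -> exists x, forall f, Brho rho f -> l f = f x.
Proof.
move=> [_ rho_cpt]; have [d d_gt0 l_small] := cont_lin_functional_small.
pose K := [set x | rho x <= d^-1].
pose D := [set p : ((E -> R) * R)%type | Cb p.1 /\ 0 < p.2].
pose approx (p : ((E -> R) * R)%type) := [set x | K x /\ `|p.1 x - l p.1| <= p.2].
have D_cst : D (fun _ => 0, 1) by split; [exact: cst_Cb | exact: ltr01].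
have approx_finI : finI D approx.
  move=> D' D'D; pose s := finmap.enum_fset D'; pose p j := nth (fun _ => 0, 1) s j.
  have Dp (j : 'I_(size s)) : D (p j) by apply/set_mem/D'D; exact: mem_nth.
  have [x [Kx xp]] := smooth_hom_approx_point d_gt0 l_small
    (fun j => (Dp j).1) (fun j => (Dp j).2).
  exists x => q /= qD'; have qs : (index q s < size s)%N by rewrite index_mem.
  by rewrite -(nth_index (fun _ => 0, 1) qD'); split=> //; exact: (xp (Ordinal qs)).
have F_K : filter_from (finI_from D approx) id K.
  by exists (approx (fun _ => 0, 1)) => [|y []]; first exact: finI_from1.
have [x [Kx x_cluster]] := rho_cpt d^-1 _ (finI_filter approx_finI) F_K.
exists x; apply: eval_on_Cb_Brho => g Cg.
have x_approx e : 0 < e -> `|g x - l g| <= e.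
  move=> e_gt0; have F_ge : filter_from (finI_from D approx) id (approx (g, e)).
    by exists (approx (g, e)) => //; exact: finI_from1.
  have : closure (approx (g, e)) x by move: x_cluster; rewrite clusterE => /(_ _ F_ge).
  have sub : approx (g, e) `<=` [set y | `|g y - l g| <= e] by move=> y [].
  move=> /(closureS sub).
  apply: (@preimage_closed _ _ (fun y => `|g y - l g|) [set r | r <= e]); last first.
    exact: closed_le.
  by move=> y _; apply: cvg_norm; apply: cvgB (cvg_cst _); exact: Cg.1.
apply/eqP; rewrite eq_sym -subr_eq0 -normr_le0; apply/ler_addgt0Pr => e e_gt0.
by rewrite add0r; exact: x_approx.
Qed.

End SmoothHom.

End ContinuousFunctional.

End WeightedSpace.

Unset Implicit Arguments.

Theorem mainTheorem13 (R : realType) (E : topologicalType) (rho : E -> R)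
  (l : (E -> R) -> R) :
  completely_regular_space E -> hausdorff_space E ->
  admissible_weight rho -> cont_lin_functional rho l ->
  (smooth_algebra_hom rho l <->
     exists x : E, forall f, Brho rho f -> l f = f x) /\
  (forall x y : E, (forall f, Brho rho f -> l f = f x) ->
     (forall f, Brho rho f -> l f = f y) -> x = y).
Proof.
move=> E_creg hE rho_adm l_cont_lin.
have [m m_gt0 m_le_rho] := admissible_weight_lbound hE rho_adm.
split; last by move=> x y; apply: (eval_point_unique m_gt0 m_le_rho E_creg hE).
split=> [l_smooth | [x lx]].
  by apply: (smooth_hom_eval m_gt0 m_le_rho l_cont_lin l_smooth rho_adm).
by apply: (eval_smooth_hom m_gt0 m_le_rho lx).
Qed.
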